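(* Given any multiple-unicast network coding problem $\mathcal{I}$ with source-destination pairs $\{ (s_i, t_i), i=1,...,k \}$, the corresponding single-source single-terminal network error correction problem $\mathcal{I}_c=(\mathcal{G},s,t,\mathcal{A})$ constructed as described below, in which $\mathcal{A}$ includes sets with at most a single edge, satisfies: rate $k$ is feasible in $\mathcal{I}_c$ if and only if unit rate is feasible in $\mathcal{I}$.
   Context: A multiple-unicast network coding problem $\mathcal{I}$ is defined on a directed network $\mathcal{N}$ of noiseless point-to-point edges (edge $e$ carries $c_e$ bits per transmission), with $k$ source-destination pairs $(s_i,t_i)$; each source $s_i$ has an independent message uniform over $[2^{nR}]$ (common rate $R$ for all sources), edges apply encoding functions of their tail node's inputs, and terminal $t_i$ decodes the message of $s_i$. Rate $R$ is feasible in $\mathcal{I}$ if for every $\epsilon>0$ there is a code (of some length $n$) under which all terminals decode correctly simultaneously with probability at least $1-\epsilon$ over the uniform messages. The single-source single-terminal network error correction problem $\mathcal{I}_c=(\mathcal{G},s,t,\mathcal{A})$ is built from $\mathcal{I}$ by embedding $\mathcal{N}$ into a larger network $\mathcal{G}$ with a new source $s$ and new terminal $t$, and $k$ parallel branches: for each $i=1,\dots,k$ there are nodes $A_i$, $B_i$ and unit-capacity edges $a_i=(s,A_i)$, $x_i=(A_i,B_i)$, $y_i=(A_i,B_i)$, $z_i=(A_i,s_i)$, $z'_i=(t_i,B_i)$, $b_i=(B_i,t)$. All edges outside $\mathcal{N}$ have unit capacity. The adversary may corrupt (xor an arbitrary error signal onto) at most one edge, which may be any edge of $\mathcal{G}$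 except $a_1,\dots,a_k,b_1,\dots,b_k$; i.e., $\mathcal{A}$ consists of all singleton sets $\{e\}$ with $e\notin\{a_i,b_i: 1\le i\le k\}$. The source message $M$ of rate $R$ is uniform over $[2^{nR}]$; a code satisfies $\mathcal{I}_c$ under message $m$ if $t$ decodes $m$ correctly under every error pattern allowed by $\mathcal{A}$, and it satisfies $\mathcal{I}_c$ with error probability $\epsilon$ if the probability (over $M$) that it satisfies $\mathcal{I}_c$ is at least $1-\epsilon$. Rate $R$ is feasible in $\mathcal{I}_c$ if for every $\epsilon>0$ such a code with error probability at most $\epsilon$ exists. *)

From HB Require Import structures.
From mathcomp Require Import all_boot all_order all_algebra.
Set Implicit Arguments. Unset Strict Implicit. Unset Printing Implicit Defensive.
Import Order.TTheory GRing.Theory Num.Theory.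

(* Edge e carries cap e bits per transmission, i.e. n * cap e bits in  *)
(* a code of length n.                                                  *)
Record net := Net {
  node : finType;
  edge : finType;
  tail : edge -> node;
  head : edge -> node;
  cap  : edge -> nat }.

Definition acyclic (N : net) : Prop :=
  exists rank : node N -> nat, forall e, (rank (tail e) < rank (head e))%N.

Definition word (n c : nat) := {ffun 'I_(n * c) -> bool}.
Definition zero_word (n c : nat) : word n c := [ffun=> false].
Definition xorw (n c : nat) (u v : word n c) : word n c := [ffun j => addb (u j) (v j)].

Definition assign (N : net) (n : nat) := {dffun forall e : edge N, word n (cap e)}.

Definition agree_in (N : net) (n : nat) (v : node N) (x y : assign N n) : Prop :=
  forall e : edge N, head e = v -> x e = y e.

Record mu_problem := MuProblem {
  mu_net : net;
  mu_k : nat;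
  mu_src : 'I_mu_k -> node mu_net;
  mu_dst : 'I_mu_k -> node mu_net }.
Arguments mu_src : clear implicits.
Arguments mu_dst : clear implicits.

Definition mu_msgs (P : mu_problem) (n R : nat) := {ffun 'I_(mu_k P) -> 'I_(2 ^ (n * R))}.

Record mu_code (P : mu_problem) (n R : nat) := MuCode {
  mu_enc : forall e : edge (mu_net P),
             assign (mu_net P) n -> mu_msgs P n R -> word n (cap e);
  mu_dec : 'I_(mu_k P) -> assign (mu_net P) n -> mu_msgs P n R -> 'I_(2 ^ (n * R)) }.

(* edge functions depend only on the inputs of the tail node (incoming edges
   and messages of the sources located at that node); decoders depend only on
   the inputs of the terminal node. *)
Definition mu_local (P : mu_problem) (n R : nat) (C : mu_code P n R) : Prop :=
  (forall (e : edge (mu_net P)) (x y : assign (mu_net P) n) (m m' : mu_msgs P n R),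
      agree_in (tail e) x y ->
      (forall i, mu_src P i = tail e -> m i = m' i) ->
      mu_enc C e x m = mu_enc C e y m') /\
  (forall (i : 'I_(mu_k P)) (x y : assign (mu_net P) n) (m m' : mu_msgs P n R),
      agree_in (mu_dst P i) x y ->
      (forall j, mu_src P j = mu_dst P i -> m j = m' j) ->
      mu_dec C i x m = mu_dec C i y m').

Definition mu_consistent (P : mu_problem) (n R : nat) (C : mu_code P n R)
    (m : mu_msgs P n R) (x : assign (mu_net P) n) : bool :=
  [forall e, x e == mu_enc C e x m].

Definition mu_success (P : mu_problem) (n R : nat) (C : mu_code P n R)
    (m : mu_msgs P n R) : bool :=
  [forall x, mu_consistent C m x ==> [forall i, mu_dec C i x m == m i]].

Definition mu_feasible (P : mu_problem) (R : nat) : Prop :=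
  forall eps : rat, (0 < eps)%R ->
  exists n : nat, (0 < n)%N /\
  exists C : mu_code P n R, mu_local C /\
    (1 - eps <= #|[set m : mu_msgs P n R | mu_success C m]|%:R
                / #|{: mu_msgs P n R}|%:R)%R.

Record ec_problem := EcProblem {
  ec_net : net;
  ec_s : node ec_net;
  ec_t : node ec_net;
  ec_adv : {set {set edge ec_net}} }.
Arguments ec_s : clear implicits.
Arguments ec_t : clear implicits.
Arguments ec_adv : clear implicits.

Definition ec_msg (n R : nat) := 'I_(2 ^ (n * R)).

Record ec_code (P : ec_problem) (n R : nat) := EcCode {
  ec_enc : forall e : edge (ec_net P), assign (ec_net P) n -> ec_msg n R -> word n (cap e);
  ec_dec : assign (ec_net P) n -> ec_msg n R -> ec_msg n R }.

Definition ec_local (P : ec_problem) (n R : nat) (C : ec_code P n R) : Prop :=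
  (forall (e : edge (ec_net P)) (x y : assign (ec_net P) n) (m m' : ec_msg n R),
      agree_in (tail e) x y -> (tail e = ec_s P -> m = m') ->
      ec_enc C e x m = ec_enc C e y m') /\
  (forall (x y : assign (ec_net P) n) (m m' : ec_msg n R),
      agree_in (ec_t P) x y -> (ec_t P = ec_s P -> m = m') ->
      ec_dec C x m = ec_dec C y m').

Definition err_support (N : net) (n : nat) (err : assign N n) : {set edge N} :=
  [set e | err e != zero_word n (cap e)].

Definition ec_allowed (P : ec_problem) (n : nat) (err : assign (ec_net P) n) : bool :=
  (err_support err == set0) || [exists Z in ec_adv P, err_support err \subset Z].

Arguments ec_allowed : clear implicits.

Definition ec_consistent (P : ec_problem) (n R : nat) (C : ec_code P n R)
    (m : ec_msg n R) (err x : assign (ec_net P) n) : bool :=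
  [forall e, x e == xorw (ec_enc C e x m) (err e)].

Definition ec_success (P : ec_problem) (n R : nat) (C : ec_code P n R)
    (m : ec_msg n R) : bool :=
  [forall err, ec_allowed P n err ==>
     [forall x, ec_consistent C m err x ==> (ec_dec C x m == m)]].

Definition ec_feasible (P : ec_problem) (R : nat) : Prop :=
  forall eps : rat, (0 < eps)%R ->
  exists n : nat, (0 < n)%N /\
  exists C : ec_code P n R, ec_local C /\
    (1 - eps <= #|[set m : ec_msg n R | ec_success C m]|%:R
                / #|{: ec_msg n R}|%:R)%R.

(* kinds of the new edges of branch i: a_i, x_i, y_i, z_i, z'_i, b_i *)
Definition ka  : 'I_6 := @Ordinal 6 0 isT.
Definition kx  : 'I_6 := @Ordinal 6 1 isT.
Definition ky  : 'I_6 := @Ordinal 6 2 isT.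
Definition kz  : 'I_6 := @Ordinal 6 3 isT.
Definition kz' : 'I_6 := @Ordinal 6 4 isT.
Definition kb  : 'I_6 := @Ordinal 6 5 isT.

Section Construction.
Variable P : mu_problem.
Local Notation N := (mu_net P).
Local Notation k := (mu_k P).

(* nodes of G: nodes of N, s (inl true), t (inl false), A_i, B_i *)
Definition Gnode : finType := (node N + (bool + ('I_k + 'I_k)))%type.
Definition Gs : Gnode := inr (inl true).
Definition Gt : Gnode := inr (inl false).
Definition GA (i : 'I_k) : Gnode := inr (inr (inl i)).
Definition GB (i : 'I_k) : Gnode := inr (inr (inr i)).

Definition Gedge : finType := (edge N + ('I_6 * 'I_k))%type.

Definition Gtail (e : Gedge) : Gnode :=
  match e with
  | inl e0 => inl (tail e0)
  | inr p =>
      let j := p.1 in let i := p.2 in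
      if j == ka then Gs
      else if (j == kx) || (j == ky) || (j == kz) then GA i
      else if j == kz' then inl (mu_dst P i)
      else GB i
  end.

Definition Ghead (e : Gedge) : Gnode :=
  match e with
  | inl e0 => inl (head e0)
  | inr p =>
      let j := p.1 in let i := p.2 in
      if j == ka then GA i
      else if (j == kx) || (j == ky) || (j == kz') then GB i
      else if j == kz then inl (mu_src P i)
      else Gt
  end.

Definition Gcap (e : Gedge) : nat :=
  match e with inl e0 => cap e0 | inr _ => 1 end.

Definition Gnet : net := Net Gtail Ghead Gcap.

Definition corruptible (e : Gedge) : bool :=
  match e with inl _ => true | inr p => (p.1 != ka) && (p.1 != kb) end.

Definition Ic : ec_problem :=
  @EcProblem Gnet Gs Gt [set [set e] | e : Gedge & corruptible e].

End Construction.

From mathcomp Require Import all_boot all_order all_algebra.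
From mathcomp Require Import zify ring lra.
Import Order.TTheory GRing.Theory Num.Theory.
Set Implicit Arguments. Unset Strict Implicit. Unset Printing Implicit Defensive.

(* If unit rate is feasible in I, s splits its message into k words and sends the i-th
   along a_i; A_i copies it onto x_i, y_i and z_i, the code for I runs on the z_i, the
   word decoded at t_i goes along z'_i, and B_i forwards x_i if x_i = y_i and z'_i
   otherwise.  An error on x_i or y_i leaves z'_i correct, and any other error leaves
   x_i = y_i correct, so every b_i is correct.

   Conversely, let C be a code for I_c.  Under a message corrected by C, t decodes
   correctly without error and after an error on any single x_i, y_i or z'_i.  Counting
   shows that for all but a (k+1)^2 fraction of the vectors w of symbols on the a-edges,
   the symbol on b_i changes neither with x_i, nor with y_i, nor with z'_i alone, so it is
   a function of w_i, and an injective one.  Two such vectors with the same symbol on z'_i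
   then give the same b_i (alter x_i on one side and y_i on the other), hence have the
   same w_i.  So running the N-part of C on the messages of I, with z_i computed from the
   message of s_i, and decoding at t_i by inverting z'_i gives a code for I whose failure
   probability is at most (k+1)^2 times that of C. *)

Definition zero_assign (N : net) (n : nat) : assign N n :=
  finfun (fun e => zero_word n (cap e)).

Lemma xorw0 n c (u : word n c) : xorw u (zero_word n c) = u.
Proof. by apply/ffunP => j; rewrite !ffunE addbF. Qed.

Lemma xorwK n c (u v : word n c) : xorw u (xorw u v) = v.
Proof. by apply/ffunP => j; rewrite !ffunE addKb. Qed.

Definition card_bij (T U : finType) (eqTU : #|T| = #|U|) (x : T) : U :=
  enum_val (cast_ord eqTU (enum_rank x)).

Lemma card_bijK (T U : finType) (eqTU : #|T| = #|U|) :
  cancel (card_bij eqTU) (card_bij (esym eqTU)).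
Proof. by move=> x; rewrite /card_bij enum_valK cast_ordK enum_rankK. Qed.

Lemma card_bijKV (T U : finType) (eqTU : #|T| = #|U|) :
  cancel (card_bij (esym eqTU)) (card_bij eqTU).
Proof. by move=> x; rewrite /card_bij enum_valK cast_ordKV enum_rankK. Qed.

Lemma card_bigcup_leq (T : finType) k (B : 'I_k -> {set T}) c :
  (forall i, #|B i| <= c) -> #|\bigcup_(i < k) B i| <= k * c.
Proof.
move=> le_Bc; rewrite -[k in k * c]card_ord -sum_nat_const.
elim/big_ind2: _ => [|A a B' b leAa leBb|i _]; first by rewrite cards0.
  by rewrite (leq_trans (leq_card_setU _ _)) ?leq_add.
exact: le_Bc.
Qed.

Lemma card_word1 n : #|{: word n 1}| = 2 ^ (n * 1).
Proof. by rewrite card_ffun card_bool card_ord. Qed.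

Lemma card_word1_vec k n : #|{: {ffun 'I_k -> word n 1}}| = 2 ^ (n * k).
Proof. by rewrite card_ffun card_word1 card_ord -expnM muln1. Qed.

Definition word_of_msg n : 'I_(2 ^ (n * 1)) -> word n 1 :=
  card_bij (etrans (card_ord _) (esym (card_word1 n))).
Definition msg_of_word n : word n 1 -> 'I_(2 ^ (n * 1)) :=
  card_bij (esym (etrans (card_ord _) (esym (card_word1 n)))).

Lemma word_of_msgK n : cancel (@word_of_msg n) (@msg_of_word n).
Proof. exact: card_bijK. Qed.

Lemma msg_of_wordK n : cancel (@msg_of_word n) (@word_of_msg n).
Proof. exact: card_bijKV. Qed.

(** * Local codes on acyclic networks *)

Section LocalFixpoint.
Variables (N : net) (n : nat) (rank : node N -> nat).
Hypothesis rank_tail_head : forall e, rank (tail e) < rank (head e).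
Variable f : forall e : edge N, assign N n -> word n (cap e).
Hypothesis f_local : forall e x y, agree_in (tail e) x y -> f e x = f e y.

Lemma local_fixpoint_unique (x y : assign N n) :
  (forall e, x e = f e x) -> (forall e, y e = f e y) -> x = y.
Proof.
move=> fx fy.
suff agree_below j e : rank (tail e) < j -> x e = y e.
  by apply/ffunP => e; apply: (agree_below (rank (tail e)).+1).
elim: j e => [//|j IHj] e lt_e.
rewrite fx fy; apply: f_local => e' head_e'.
by apply: IHj; have := rank_tail_head e'; rewrite head_e'; lia.
Qed.

Lemma local_fixpoint_exists : exists x : assign N n, forall e, x e = f e x.
Proof.
pose step (x : assign N n) : assign N n := finfun (fun e => f e x).
pose x0 := zero_assign N n.
have settled j e p : rank (tail e) < j -> iter (j + p) step x0 e = iter j step x0 e.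
  elim: j e p => [//|j IHj] e p lt_e.
  rewrite addSn /= !ffunE; apply: f_local => e' head_e'.
  by apply: IHj; have := rank_tail_head e'; rewrite head_e'; lia.
pose depth := (\max_(e : edge N) rank (tail e)).+1.
exists (iter depth step x0) => e.
have lt_e : rank (tail e) < depth.
  by rewrite ltnS (@bigop.leq_bigmax _ (fun e => rank (tail e)) e).
by rewrite -[LHS](settled _ _ 1 lt_e) addn1 iterS ffunE.
Qed.

End LocalFixpoint.

(** * The network of I_c *)

Lemma kind_cases (j : 'I_6) :
  j = ka \/ j = kx \/ j = ky \/ j = kz \/ j = kz' \/ j = kb.
Proof.
case: j => [[|[|[|[|[|[|j]]]]]] lt_j6] //.
- by left; apply: val_inj.
- by right; left; apply: val_inj.
- by do 2 right; left; apply: val_inj.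
- by do 3 right; left; apply: val_inj.
- by do 4 right; left; apply: val_inj.
- by do 5 right; apply: val_inj.
Qed.

Section GNetwork.
Variables (P : mu_problem) (n : nat).
Local Notation k := (mu_k P).
Local Notation G := (Gnet P).

Definition G_assign (x : assign (mu_net P) n) (g : 'I_6 -> 'I_k -> word n 1) :
    assign G n :=
  finfun (fun e : Gedge P => match e as e return word n (Gcap e) with
    | inl e0 => x e0
    | inr p => g p.1 p.2
    end).

Lemma G_assign_l x g e0 : G_assign x g (inl e0) = x e0.
Proof. by rewrite ffunE. Qed.

Lemma G_assign_r x g j i : G_assign x g (inr (j, i)) = g j i.
Proof. by rewrite ffunE. Qed.

Definition G_single (p : 'I_6 * 'I_k) (v : word n 1) : assign G n :=
  G_assign (zero_assign _ n) (fun j i => if (j, i) == p then v else zero_word n 1).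

Lemma Gnet_acyclic : acyclic (mu_net P) -> acyclic G.
Proof.
case=> rank rank_lt; pose top := \max_(u : node (mu_net P)) rank u.
have le_top u : rank u <= top by exact: (@bigop.leq_bigmax _ rank u).
(* ranks: s < A_i < nodes of N < B_i < t *)
exists (fun v : Gnode P => match v with
  | inl u => (rank u).+2
  | inr (inl true) => 0
  | inr (inl false) => top.+4
  | inr (inr (inl _)) => 1
  | inr (inr (inr _)) => top.+3
  end).
move=> [e0|[j i]] /=; first by have := rank_lt e0; lia.
case: (kind_cases j) => [->|[->|[->|[->|[->|->]]]]] /=; try lia.
by have := le_top (mu_dst P i); lia.
Qed.

Section Agreement.
Variables X Y : assign G n.

Lemma agree_Gs : agree_in (Gs P : node G) X Y.
Proof. by move=> [e0|[j i]] //=; case: (kind_cases j) => [->|[->|[->|[->|[->|->]]]]]. Qed.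

Lemma agree_GA i : X (inr (ka, i)) = Y (inr (ka, i)) -> agree_in (GA i : node G) X Y.
Proof.
move=> eq_a [e0|[j i']] //=.
by case: (kind_cases j) => [->|[->|[->|[->|[->|->]]]]] //= [->].
Qed.

Lemma agree_GB i :
  X (inr (kx, i)) = Y (inr (kx, i)) -> X (inr (ky, i)) = Y (inr (ky, i)) ->
  X (inr (kz', i)) = Y (inr (kz', i)) -> agree_in (GB i : node G) X Y.
Proof.
move=> eq_x eq_y eq_z' [e0|[j i']] //=.
by case: (kind_cases j) => [->|[->|[->|[->|[->|->]]]]] //= [->].
Qed.

Lemma agree_Gt : (forall i, X (inr (kb, i)) = Y (inr (kb, i))) -> agree_in (Gt P : node G) X Y.
Proof.
move=> eq_b [e0|[j i]] //=.
by case: (kind_cases j) => [->|[->|[->|[->|[->|->]]]]] //= _; apply: eq_b.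
Qed.

Lemma agree_Gnode v :
  (forall e0, head e0 = v -> X (inl e0) = Y (inl e0)) ->
  (forall i, mu_src P i = v -> X (inr (kz, i)) = Y (inr (kz, i))) ->
  agree_in (inl v : node G) X Y.
Proof.
move=> eq_net eq_z [e0|[j i]] /=; first by move=> [] /eq_net.
by case: (kind_cases j) => [->|[->|[->|[->|[->|->]]]]] //= [] /eq_z.
Qed.

End Agreement.

Lemma allowed_support (err : assign G n) e1 e2 :
  ec_allowed (Ic P) n err -> err e1 != zero_word n (cap e1) ->
  corruptible e1 /\ (e2 != e1 -> err e2 = zero_word n (cap e2)).
Proof.
rewrite /ec_allowed => err_ok err_e1; case/orP: err_ok => [/eqP supp0|].
  have : e1 \in err_support err by rewrite inE.
  by rewrite supp0 inE.
case/existsP => Z /andP [] /= /imsetP [e /=]; rewrite inE => corr_e -> /subsetP supp_e.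
have /eqP -> : e1 == e by have := supp_e e1; rewrite !inE; apply.
split=> // ne_e2; apply/eqP; apply: contraNT ne_e2 => err_e2.
by have := supp_e e2; rewrite !inE; apply.
Qed.

Lemma allowed_no_error :
  ec_allowed (Ic P) n (G_assign (zero_assign _ n) (fun _ _ => zero_word n 1)).
Proof.
apply/orP; left; apply/eqP/setP => -[e0|[j i]];
  by rewrite !inE ?G_assign_l ?G_assign_r ?ffunE eqxx.
Qed.

Lemma allowed_single j i v :
  corruptible (inr (j, i) : Gedge P) -> ec_allowed (Ic P) n (G_single (j, i) v).
Proof.
move=> corr_ji; apply/orP; right; apply/existsP; exists [set (inr (j, i) : Gedge P)].
apply/andP; split; first by apply/imsetP; exists (inr (j, i)); rewrite ?inE.
apply/subsetP => -[e0|[j' i']]; rewrite !inE /G_single ?G_assign_l ?G_assign_r.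
  by rewrite ffunE eqxx.
by case: ifP => [/eqP [-> ->] _|_]; rewrite ?eqxx.
Qed.

End GNetwork.

(** * From unit rate in I to rate k in I_c *)

Lemma card_mu_msgs P n : #|{: mu_msgs P n 1}| = 2 ^ (n * mu_k P).
Proof. by rewrite card_ffun !card_ord -expnM muln1. Qed.

Definition split_msg P n : ec_msg n (mu_k P) -> mu_msgs P n 1 :=
  card_bij (etrans (card_ord _) (esym (card_mu_msgs P n))).
Definition join_msg P n : mu_msgs P n 1 -> ec_msg n (mu_k P) :=
  card_bij (esym (etrans (card_ord _) (esym (card_mu_msgs P n)))).

Lemma split_msgK P n : cancel (@split_msg P n) (@join_msg P n).
Proof. exact: card_bijK. Qed.

Lemma split_msg_bij P n : bijective (@split_msg P n).
Proof. by exists (@join_msg P n); [exact: card_bijK | exact: card_bijKV]. Qed.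

Section RelayCode.
Variables (P : mu_problem) (n : nat) (Cm : mu_code P n 1).
Local Notation k := (mu_k P).
Local Notation G := (Gnet P).

Definition net_part (X : assign G n) : assign (mu_net P) n := finfun (fun e => X (inl e)).

Definition z_msgs (X : assign G n) : mu_msgs P n 1 :=
  [ffun i => msg_of_word (X (inr (kz, i)))].

Definition relay_enc (e : Gedge P) (X : assign G n) (m : ec_msg n k) : word n (Gcap e) :=
  match e as e return word n (Gcap e) with
  | inl e0 => mu_enc Cm e0 (net_part X) (z_msgs X)
  | inr p => let j := p.1 in let i := p.2 in
      if j == ka then word_of_msg (split_msg m i)
      else if (j == kx) || (j == ky) || (j == kz) then X (inr (ka, i))
      else if j == kz' then word_of_msg (mu_dec Cm i (net_part X) (z_msgs X))
      else if X (inr (kx, i)) == X (inr (ky, i)) then X (inr (kx, i))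
      else X (inr (kz', i))
  end.

Definition relay_dec (X : assign G n) (m : ec_msg n k) : ec_msg n k :=
  join_msg [ffun i => msg_of_word (X (inr (kb, i)))].

Definition relay_code : ec_code (Ic P) n k := @EcCode (Ic P) n k relay_enc relay_dec.

Lemma agree_net_part v (X Y : assign G n) : agree_in (inl v : node G) X Y ->
  agree_in v (net_part X) (net_part Y) /\
  (forall i, mu_src P i = v -> z_msgs X i = z_msgs Y i).
Proof.
move=> agreeXY; split=> [e0 head_e0|i src_i]; rewrite !ffunE.
  by apply: (agreeXY (inl e0)); rewrite /= head_e0.
by congr msg_of_word; apply: (agreeXY (inr (kz, i))); rewrite /= src_i.
Qed.

Lemma relay_code_local : mu_local Cm -> ec_local relay_code.
Proof.
case=> enc_local dec_local; split=> [e X Y m m' agreeXY eq_m|X Y m m' agreeXY _].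
- case: e agreeXY eq_m => [e0|[j i]] agreeXY eq_m /=.
  + by have [? ?] := agree_net_part agreeXY; apply: enc_local.
  + case: (kind_cases j) agreeXY eq_m => [->|[->|[->|[->|[->|->]]]]] /= agreeXY eq_m.
    * by rewrite eq_m.
    * by rewrite (agreeXY (inr (ka, i))).
    * by rewrite (agreeXY (inr (ka, i))).
    * by rewrite (agreeXY (inr (ka, i))).
    * by have [? ?] := agree_net_part agreeXY; rewrite (dec_local i _ (net_part Y) _ (z_msgs Y)).
    * by rewrite (agreeXY (inr (kx, i))) // (agreeXY (inr (ky, i))) // (agreeXY (inr (kz', i))).
- congr join_msg; apply/ffunP => i.
  by rewrite !ffunE (agreeXY (inr (kb, i))).
Qed.

Section RelayRun.
Variables (m : ec_msg n k) (err X : assign G n).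
Hypothesis err_ok : ec_allowed (Ic P) n err.
Hypothesis X_run : ec_consistent relay_code m err X.
Hypothesis Cm_success : mu_success Cm (split_msg m).

Let X_at e : X e = xorw (relay_enc e X m) (err e).
Proof. by apply/eqP; move/forallP: X_run. Qed.

Let err_elsewhere e1 e2 :
  err e1 != zero_word n (cap e1) -> e2 != e1 -> err e2 = zero_word n (cap e2).
Proof. by move=> err_e1; case: (allowed_support e2 err_ok err_e1). Qed.

Let err_uncorruptible (e : edge G) : ~~ corruptible e -> err e = zero_word n (cap e).
Proof.
move=> uncorr_e; apply/eqP; apply: contraNT uncorr_e => err_e.
by case: (allowed_support e err_ok err_e).
Qed.

Lemma relay_a i : X (inr (ka, i)) = word_of_msg (split_msg m i).
Proof. by rewrite X_at err_uncorruptible // xorw0. Qed.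

Lemma relay_z' i :
  (forall e0, err (inl e0) = zero_word n (cap e0)) ->
  (forall j, err (inr (kz, j)) = zero_word n 1) ->
  err (inr (kz', i)) = zero_word n 1 ->
  X (inr (kz', i)) = word_of_msg (split_msg m i).
Proof.
move=> err_net err_z err_z'.
have z_msgsE : z_msgs X = split_msg m.
  by apply/ffunP => j; rewrite ffunE X_at err_z xorw0 /= relay_a word_of_msgK.
have net_run : mu_consistent Cm (split_msg m) (net_part X).
  by apply/forallP => e0; rewrite ffunE X_at err_net xorw0 /= z_msgsE.
rewrite X_at err_z' xorw0 /= z_msgsE.
by move/forallP/(_ (net_part X)): Cm_success; rewrite net_run => /forallP/(_ i)/eqP ->.
Qed.

Lemma relay_b i : X (inr (kb, i)) = word_of_msg (split_msg m i).
Proof.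
set w := word_of_msg _.
rewrite X_at err_uncorruptible // xorw0 /=.
have copy_ok (j : 'I_6) : j \in [:: kx; ky] ->
    err (inr (j, i)) = zero_word n 1 -> X (inr (j, i)) = w.
  by rewrite !inE => /orP [] /eqP -> err_j; rewrite X_at err_j xorw0 /= relay_a.
have z'_ok (e1 : edge G) : e1 \in [:: inr (kx, i); inr (ky, i)] ->
    err e1 != zero_word n (cap e1) -> X (inr (kz', i)) = w.
  move=> e1_xy err_e1; apply: relay_z' => [e0|j|]; apply: err_elsewhere err_e1 _;
    by move: e1_xy; rewrite !inE => /orP [] /eqP ->.
have [err_x|err_x] := eqVneq (err (inr (kx, i))) (zero_word n 1);
  have [err_y|err_y] := eqVneq (err (inr (ky, i))) (zero_word n 1).
- by rewrite (copy_ok kx) ?(copy_ok ky) ?inE ?eqxx ?orbT.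
- by rewrite (copy_ok kx) ?(z'_ok _ _ err_y) ?inE ?eqxx ?orbT //; case: eqP.
- by rewrite (copy_ok ky) ?(z'_ok _ _ err_x) ?inE ?eqxx ?orbT //; case: eqP.
- by move: err_y; rewrite (@err_elsewhere _ (inr (ky, i)) err_x) ?eqxx.
Qed.

End RelayRun.

Lemma relay_code_success m : mu_success Cm (split_msg m) -> ec_success relay_code m.
Proof.
move=> Cm_success; apply/forallP => err; apply/implyP => err_ok.
apply/forallP => X; apply/implyP => X_run; apply/eqP.
rewrite /= /relay_dec -[RHS](split_msgK m); congr join_msg.
by apply/ffunP => i; rewrite ffunE (relay_b err_ok X_run Cm_success) word_of_msgK.
Qed.

End RelayCode.

Lemma ec_feasible_of_mu_feasible P : mu_feasible P 1 -> ec_feasible (Ic P) (mu_k P).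
Proof.
move=> feasible eps eps_gt0; have [n [n_gt0 [Cm [Cm_local Cm_rate]]]] := feasible eps eps_gt0.
exists n; split=> //; exists (relay_code Cm); split; first exact: relay_code_local.
apply: le_trans Cm_rate _.
rewrite (etrans (card_ord _) (esym (card_mu_msgs P n))).
apply: ler_wpM2r; first by rewrite invr_ge0 ler0n.
rewrite ler_nat -(on_card_preimset (onW_bij _ (split_msg_bij P n))).
by apply: subset_leq_card; apply/subsetP => m; rewrite !inE; apply: relay_code_success.
Qed.

(** * From rate k in I_c to unit rate in I *)

Definition syms_of_msgs P n (mm : mu_msgs P n 1) : {ffun 'I_(mu_k P) -> word n 1} :=
  [ffun i => word_of_msg (mm i)].
Definition msgs_of_syms P n (w : {ffun 'I_(mu_k P) -> word n 1}) : mu_msgs P n 1 :=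
  [ffun i => msg_of_word (w i)].

Lemma syms_of_msgsK P n : cancel (@syms_of_msgs P n) (@msgs_of_syms P n).
Proof. by move=> mm; apply/ffunP => i; rewrite !ffunE word_of_msgK. Qed.

Lemma msgs_of_symsK P n : cancel (@msgs_of_syms P n) (@syms_of_msgs P n).
Proof. by move=> w; apply/ffunP => i; rewrite !ffunE msg_of_wordK. Qed.

Section ExtractedCode.
Variables (P : mu_problem) (n : nat) (C : ec_code (Ic P) n (mu_k P)).
Hypotheses (C_local : ec_local C) (P_acyclic : acyclic (mu_net P)).
Local Notation k := (mu_k P).
Local Notation G := (Gnet P).
Local Notation syms := {ffun 'I_k -> word n 1}.

(* By locality the symbols on x_i, y_i, z_i depend only on the one on a_i, the one on b_i
   only on those on x_i, y_i, z'_i, and no encoder away from s reads the message; the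
   functions below read these dependencies off by evaluating encoders on assignments
   vanishing elsewhere and on the arbitrary message msg0. *)
Definition msg0 : ec_msg n k := Ordinal (expn_gt0 2 (n * k) : 0 < 2 ^ (n * k)).

Definition a_syms (m : ec_msg n k) : syms :=
  [ffun i => ec_enc C (inr (ka, i)) (zero_assign G n) m].

Definition x_sym i (v : word n 1) : word n 1 :=
  ec_enc C (inr (kx, i)) (G_single (ka, i) v) msg0.
Definition y_sym i (v : word n 1) : word n 1 :=
  ec_enc C (inr (ky, i)) (G_single (ka, i) v) msg0.
Definition z_sym i (v : word n 1) : word n 1 :=
  ec_enc C (inr (kz, i)) (G_single (ka, i) v) msg0.

Definition b_sym i (x y z' : word n 1) : word n 1 :=
  ec_enc C (inr (kb, i)) (G_assign (zero_assign _ n) (fun j i' =>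
    if i' != i then zero_word n 1 else
    if j == kx then x else if j == ky then y else if j == kz' then z' else zero_word n 1))
  msg0.

Definition t_dec (bs : syms) : ec_msg n k :=
  ec_dec C (G_assign (zero_assign _ n) (fun j i => if j == kb then bs i else zero_word n 1))
    msg0.

Definition embed (x : assign (mu_net P) n) (w : syms) : assign G n :=
  G_assign x (fun j i => if j == kz then z_sym i (w i) else zero_word n 1).

Definition sim_enc e0 (x : assign (mu_net P) n) (mm : mu_msgs P n 1) : word n (cap e0) :=
  ec_enc C (inl e0) (embed x (syms_of_msgs mm)) msg0.

Definition sim_consistent (mm : mu_msgs P n 1) (x : assign (mu_net P) n) : bool :=
  [forall e, x e == sim_enc e x mm].

Definition sim_run (mm : mu_msgs P n 1) : assign (mu_net P) n :=
  odflt (zero_assign _ n) [pick x | sim_consistent mm x].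

Definition z'_sym i (w : syms) : word n 1 :=
  ec_enc C (inr (kz', i)) (embed (sim_run (msgs_of_syms w)) w) msg0.

Lemma embed_agree v x y (w w' : syms) : agree_in v x y ->
  (forall i, mu_src P i = v -> w i = w' i) ->
  agree_in (inl v : node G) (embed x w) (embed y w').
Proof.
move=> agree_xy eq_w; apply: agree_Gnode => [e0 head_e0|i src_i].
  by rewrite !G_assign_l; apply: agree_xy.
by rewrite !G_assign_r /= eq_w.
Qed.

Lemma sim_enc_local e0 x y (mm mm' : mu_msgs P n 1) : agree_in (tail e0) x y ->
  (forall i, mu_src P i = tail e0 -> mm i = mm' i) -> sim_enc e0 x mm = sim_enc e0 y mm'.
Proof.
move=> agree_xy eq_mm; apply: (C_local.1 (inl e0)) => //.
by apply: embed_agree => // i /eq_mm; rewrite !ffunE => ->.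
Qed.

Lemma sim_run_eq mm x : sim_consistent mm x -> sim_run mm = x.
Proof.
case: P_acyclic => rank rank_lt x_run; rewrite /sim_run.
case: pickP => [x' x'_run|/(_ x)]; last by rewrite x_run.
apply: (local_fixpoint_unique rank_lt (f := fun e x => sim_enc e x mm)).
- by move=> e y z agree_yz; apply: sim_enc_local.
- by move=> e; apply/eqP; move/forallP: x'_run.
- by move=> e; apply/eqP; move/forallP: x_run.
Qed.

Section ErroneousRun.
Variables (m : ec_msg n k) (sv : 'I_6 -> 'I_k -> word n 1).
Hypotheses (sv_a : forall i, sv ka i = zero_word n 1)
  (sv_z : forall i, sv kz i = zero_word n 1) (sv_b : forall i, sv kb i = zero_word n 1).
Variable X : assign G n.
Hypothesis X_run : forall e, X e = xorw (ec_enc C e X m) (G_assign (zero_assign _ n) sv e).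

Let X_net e0 : X (inl e0) = ec_enc C (inl e0) X m.
Proof. by rewrite X_run G_assign_l ffunE xorw0. Qed.

Let X_new j i : X (inr (j, i)) = xorw (ec_enc C (inr (j, i)) X m) (sv j i).
Proof. by rewrite X_run G_assign_r. Qed.

Lemma run_a i : X (inr (ka, i)) = a_syms m i.
Proof.
rewrite X_new sv_a xorw0 ffunE.
by apply: (C_local.1 (inr (ka, i))) => //; apply: agree_Gs.
Qed.

Let run_branch i j : (j == kx) || (j == ky) || (j == kz) ->
  ec_enc C (inr (j, i)) X m = ec_enc C (inr (j, i)) (G_single (ka, i) (a_syms m i)) msg0.
Proof.
move=> j_xyz; have tail_j : tail (inr (j, i) : edge G) = GA i.
  by case/orP: j_xyz => [/orP[]|] /eqP ->.
apply: (C_local.1 (inr (j, i))); rewrite tail_j //.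
by apply: agree_GA; rewrite run_a /G_single G_assign_r eqxx.
Qed.

Lemma run_x i : X (inr (kx, i)) = xorw (x_sym i (a_syms m i)) (sv kx i).
Proof. by rewrite X_new run_branch. Qed.

Lemma run_y i : X (inr (ky, i)) = xorw (y_sym i (a_syms m i)) (sv ky i).
Proof. by rewrite X_new run_branch. Qed.

Lemma run_z i : X (inr (kz, i)) = z_sym i (a_syms m i).
Proof. by rewrite X_new run_branch // sv_z xorw0. Qed.

Let agree_embed v : agree_in (inl v : node G) X (embed (net_part X) (a_syms m)).
Proof.
apply: agree_Gnode => [e0 _|i _]; rewrite /embed ?G_assign_l ?G_assign_r.
  by rewrite ffunE.
by rewrite run_z.
Qed.

Lemma run_net : net_part X = sim_run (msgs_of_syms (a_syms m)).
Proof.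
symmetry; apply: sim_run_eq; apply/forallP => e0; apply/eqP.
rewrite ffunE X_net /sim_enc msgs_of_symsK.
by apply: (C_local.1 (inl e0)) => //; apply: agree_embed.
Qed.

Lemma run_z' i : X (inr (kz', i)) = xorw (z'_sym i (a_syms m)) (sv kz' i).
Proof.
rewrite X_new /z'_sym -run_net; congr xorw.
by apply: (C_local.1 (inr (kz', i))) => //; apply: agree_embed.
Qed.

Lemma run_b i : X (inr (kb, i)) = b_sym i (X (inr (kx, i))) (X (inr (ky, i))) (X (inr (kz', i))).
Proof.
rewrite X_new sv_b xorw0; apply: (C_local.1 (inr (kb, i))) => //.
by apply: agree_GB; rewrite G_assign_r /= eqxx.
Qed.

Lemma run_t : ec_dec C X m = t_dec [ffun i => b_sym i
  (xorw (x_sym i (a_syms m i)) (sv kx i)) (xorw (y_sym i (a_syms m i)) (sv ky i))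
  (xorw (z'_sym i (a_syms m)) (sv kz' i))].
Proof.
apply: C_local.2 => //; apply: agree_Gt => i.
by rewrite G_assign_r /= ffunE run_b run_x run_y run_z'.
Qed.

End ErroneousRun.

Lemma t_dec_corrects m sv : ec_success C m ->
  (forall i, sv ka i = zero_word n 1) -> (forall i, sv kz i = zero_word n 1) ->
  (forall i, sv kb i = zero_word n 1) ->
  ec_allowed (Ic P) n (G_assign (zero_assign _ n) sv) ->
  t_dec [ffun i => b_sym i
    (xorw (x_sym i (a_syms m i)) (sv kx i)) (xorw (y_sym i (a_syms m i)) (sv ky i))
    (xorw (z'_sym i (a_syms m)) (sv kz' i))] = m.
Proof.
move=> m_ok sv_a sv_z sv_b err_ok; set err := G_assign _ sv in err_ok.
have [rank rank_lt] := Gnet_acyclic P_acyclic.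
have [X X_run] : exists X : assign G n, forall e, X e = xorw (ec_enc C e X m) (err e).
  apply: (local_fixpoint_exists rank_lt) => e Y Z agreeYZ.
  by rewrite (C_local.1 e Y Z m m agreeYZ).
rewrite -(run_t sv_a sv_z sv_b X_run).
have X_cons : ec_consistent C m err X by apply/forallP => e; apply/eqP; apply: X_run.
by move/forallP/(_ err): m_ok; rewrite err_ok => /forallP/(_ X); rewrite X_cons => /eqP.
Qed.

Definition good : {set ec_msg n k} := [set m | ec_success C m].
Definition good_a : {set syms} := a_syms @: good.

Definition b_syms (w : syms) : syms :=
  [ffun i => b_sym i (x_sym i (w i)) (y_sym i (w i)) (z'_sym i w)].

Definition upd (w : syms) i (c : word n 1) : syms := [ffun j => if j == i then c else w j].

Lemma upd_at w i c : upd w i c i = c.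
Proof. by rewrite ffunE eqxx. Qed.

Lemma t_dec_robust m : m \in good -> let w := a_syms m in
  [/\ t_dec (b_syms w) = m,
      forall i x', t_dec (upd (b_syms w) i (b_sym i x' (y_sym i (w i)) (z'_sym i w))) = m,
      forall i y', t_dec (upd (b_syms w) i (b_sym i (x_sym i (w i)) y' (z'_sym i w))) = m &
      forall i z', t_dec (upd (b_syms w) i (b_sym i (x_sym i (w i)) (y_sym i (w i)) z')) = m].
Proof.
rewrite inE => m_ok w; have corrects := t_dec_corrects m_ok.
split.
- rewrite -[RHS](corrects (fun _ _ => zero_word n 1)) ?allowed_no_error //.
  by congr t_dec; apply/ffunP => i; rewrite !ffunE !xorw0.
- move=> i x'; rewrite -[RHS](corrects (fun j' i' => if (j', i') == (kx, i)
      then xorw (x_sym i (w i)) x' else zero_word n 1)) ?allowed_single //.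
  congr t_dec; apply/ffunP => i'; rewrite !ffunE !xpair_eqE /=.
  by case: (eqVneq i' i) => [->|_] /=; rewrite ?xorwK ?xorw0.
- move=> i y'; rewrite -[RHS](corrects (fun j' i' => if (j', i') == (ky, i)
      then xorw (y_sym i (w i)) y' else zero_word n 1)) ?allowed_single //.
  congr t_dec; apply/ffunP => i'; rewrite !ffunE !xpair_eqE /=.
  by case: (eqVneq i' i) => [->|_] /=; rewrite ?xorwK ?xorw0.
- move=> i z'; rewrite -[RHS](corrects (fun j' i' => if (j', i') == (kz', i)
      then xorw (z'_sym i w) z' else zero_word n 1)) ?allowed_single //.
  congr t_dec; apply/ffunP => i'; rewrite !ffunE !xpair_eqE /=.
  by case: (eqVneq i' i) => [->|_] /=; rewrite ?xorwK ?xorw0.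
Qed.

Lemma good_a_decode w : w \in good_a ->
  a_syms (t_dec (b_syms w)) = w /\ t_dec (b_syms w) \in good.
Proof. by case/imsetP=> m m_ok ->; have [-> _ _ _] := t_dec_robust m_ok. Qed.

Lemma t_dec_b_syms_inj : {in good_a &, injective (t_dec \o b_syms)}.
Proof.
move=> w w' w_ok w'_ok /= eq_dec.
by have [<- _] := good_a_decode w_ok; have [<- _] := good_a_decode w'_ok; rewrite eq_dec.
Qed.

Lemma b_syms_inj : {in good_a &, injective b_syms}.
Proof. by move=> w w' w_ok w'_ok eq_b; apply: t_dec_b_syms_inj => //=; rewrite eq_b. Qed.

Lemma card_good_a : #|good_a| = #|good|.
Proof.
apply: card_in_imset => m m' m_ok m'_ok eq_a.
by have [<- _ _ _] := t_dec_robust m_ok; have [<- _ _ _] := t_dec_robust m'_ok; rewrite eq_a.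
Qed.

Definition ambiguous i : {set syms} :=
  [set w in good_a | [exists c, (c != b_syms w i) &&
     (t_dec (upd (b_syms w) i c) == t_dec (b_syms w))]].

Definition rigid : {set syms} := [set w in good_a | [forall i, w \notin ambiguous i]].

Definition b_of_a i (v : word n 1) : word n 1 := b_sym i (x_sym i v) (y_sym i v) (zero_word n 1).

Lemma not_ambiguous i w c : w \in good_a -> w \notin ambiguous i ->
  t_dec (upd (b_syms w) i c) = t_dec (b_syms w) -> c = b_syms w i.
Proof.
move=> w_ok w_amb eq_dec; apply/eqP; apply: contraNT w_amb => ne_c.
by rewrite inE w_ok; apply/existsP; exists c; rewrite ne_c eq_dec eqxx.
Qed.

Lemma rigid_b_sym w i : w \in rigid ->
  [/\ b_syms w i = b_of_a i (w i),
      forall x', b_sym i x' (y_sym i (w i)) (z'_sym i w) = b_of_a i (w i) &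
      forall y', b_sym i (x_sym i (w i)) y' (z'_sym i w) = b_of_a i (w i)].
Proof.
case/setIdP=> w_ok /forallP/(_ i) w_amb.
have [a_dec dec_ok] := good_a_decode w_ok.
have [dec0 dec_x dec_y dec_z'] := t_dec_robust dec_ok; rewrite a_dec in dec0 dec_x dec_y dec_z'.
have b_w : b_of_a i (w i) = b_syms w i.
  by apply: (not_ambiguous w_ok w_amb); rewrite dec_z'.
split=> [|x'|y']; rewrite b_w //; apply: (not_ambiguous w_ok w_amb).
  by rewrite dec_x.
by rewrite dec_y.
Qed.

Lemma rigid_b_syms w : w \in rigid -> b_syms w = [ffun i => b_of_a i (w i)].
Proof. by move=> w_rigid; apply/ffunP => i; rewrite [RHS]ffunE; case: (rigid_b_sym i w_rigid). Qed.

Definition confusable i : {set word n 1} :=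
  [set v | [exists v', (v' != v) && (b_of_a i v' == b_of_a i v)]].

Definition decodable : {set syms} := [set w in rigid | [forall i, w i \notin confusable i]].

(* Two decodable a-symbol vectors with the same z'_i produce the same b_i:
   on each side change the other edge among x_i, y_i. *)
Lemma decodable_z'_sym_inj i w w' : w \in decodable -> w' \in decodable ->
  z'_sym i w = z'_sym i w' -> w i = w' i.
Proof.
move=> /setIdP [w_rigid /forallP/(_ i) w_conf] /setIdP [w'_rigid _] eq_z'.
have [_ _ b_y] := rigid_b_sym i w_rigid; have [_ b_x _] := rigid_b_sym i w'_rigid.
have eq_b : b_of_a i (w' i) = b_of_a i (w i) by rewrite -(b_x (x_sym i (w i))) -eq_z' b_y.
apply/eqP; apply: contraNT w_conf => ne_w.
by rewrite inE; apply/existsP; exists (w' i); rewrite eq_sym ne_w eq_b eqxx.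
Qed.

Lemma rigid_good_a w : w \in rigid -> w \in good_a.
Proof. by case/setIdP. Qed.

(* b_syms on good_a, and b_syms altered at i on the ambiguous vectors, are injective
   with disjoint images *)
Lemma card_good_a_ambiguous i : #|good_a| + #|ambiguous i| <= 2 ^ (n * k).
Proof.
pose alt w := odflt (b_syms w i) [pick c | (c != b_syms w i) &&
  (t_dec (upd (b_syms w) i c) == t_dec (b_syms w))].
pose b' w := upd (b_syms w) i (alt w).
have alt_spec w : w \in ambiguous i ->
    [/\ w \in good_a, alt w != b_syms w i & t_dec (b' w) = t_dec (b_syms w)].
  case/setIdP=> w_ok /existsP [c c_ok]; rewrite /b' /alt.
  by case: pickP => [c' /andP [? /eqP]|/(_ c)] //; rewrite c_ok.
have inj_b' : {in ambiguous i &, injective b'}.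
  move=> w w' /alt_spec [w_ok _ dec_w] /alt_spec [w'_ok _ dec_w'] eq_b'.
  by apply: t_dec_b_syms_inj => //=; rewrite -dec_w -dec_w' eq_b'.
have disjoint : b_syms @: good_a :&: b' @: ambiguous i = set0.
  apply/setP => u; rewrite !inE; apply/negbTE/andP.
  case=> /imsetP [w w_ok ->] /imsetP [w' /alt_spec [w'_ok ne_alt dec_w'] eq_u].
  have eq_w : w = w' by apply: t_dec_b_syms_inj => //=; rewrite eq_u.
  by subst w'; move: ne_alt; rewrite -[alt w](upd_at (b_syms w) i) -/(b' w) -eq_u eqxx.
rewrite -(card_in_imset b_syms_inj) -(card_in_imset inj_b') -cardsUI disjoint cards0.
by rewrite addn0 -(card_word1_vec k n) max_card.
Qed.

(* Moving w_i to a symbol with the same b_of_a keeps b_syms, hence leaves rigid. *)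
Lemma card_rigid_confusable i :
  #|[set w in rigid | w i \in confusable i]| <= #|~: rigid|.
Proof.
pose other v := odflt v [pick v' | (v' != v) && (b_of_a i v' == b_of_a i v)].
have other_spec v : v \in confusable i -> other v != v /\ b_of_a i (other v) = b_of_a i v.
  rewrite inE => /existsP [v' v'_ok]; rewrite /other.
  by case: pickP => [v'' /andP [? /eqP]|/(_ v')] //; rewrite v'_ok.
pose swap w := upd w i (other (w i)).
have b_swap (w : syms) : w i \in confusable i ->
    [ffun j => b_of_a j (swap w j)] = [ffun j => b_of_a j (w j)].
  move=> w_conf; apply/ffunP => j; rewrite !ffunE.
  by case: (eqVneq j i) => [->|//]; case: (other_spec _ w_conf).
have b_syms_swap (w w' : syms) : w \in rigid -> w' \in rigid -> w i \in confusable i ->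
    b_syms w' = [ffun j => b_of_a j (swap w j)] -> w' = w.
  move=> w_rigid w'_rigid w_conf eq_b; apply: b_syms_inj; rewrite ?rigid_good_a //.
  by rewrite eq_b b_swap // rigid_b_syms.
have inj_swap : {in [set w in rigid | w i \in confusable i] &, injective swap}.
  move=> w w' /setIdP [w_rigid w_conf] /setIdP [w'_rigid w'_conf] eq_swap.
  apply/esym/b_syms_swap => //.
  by rewrite rigid_b_syms // -(b_swap w') // eq_swap.
rewrite -(card_in_imset inj_swap); apply: subset_leq_card; apply/subsetP => u.
case/imsetP=> w /setIdP [w_rigid w_conf] ->; rewrite inE; apply/negP => swap_rigid.
have := upd_at w i (other (w i)); rewrite -/(swap w) (b_syms_swap w (swap w)) //.
  by case: (other_spec _ w_conf) => + _ eq_other; rewrite -eq_other eqxx.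
by rewrite rigid_b_syms.
Qed.

Lemma card_not_rigid : #|~: rigid| <= k.+1 * #|~: good_a|.
Proof.
have sub : ~: rigid \subset ~: good_a :|: \bigcup_(i < k) ambiguous i.
  apply/subsetP => w; rewrite !inE negb_and => /orP [->//|/forallPn [i]].
  by rewrite negbK => w_amb; apply/orP; right; apply/bigcupP; exists i.
apply: leq_trans (subset_leq_card sub) _; apply: leq_trans (leq_card_setU _ _) _.
rewrite mulSn leq_add2l; apply: card_bigcup_leq => i.
by have := card_good_a_ambiguous i; have := cardsC good_a; rewrite card_word1_vec; lia.
Qed.

Lemma card_not_decodable : #|~: decodable| <= k.+1 * #|~: rigid|.
Proof.
have sub : ~: decodable \subset
    ~: rigid :|: \bigcup_(i < k) [set w in rigid | w i \in confusable i].
  apply/subsetP => w; rewrite in_setU !in_setC [w \in decodable]inE negb_and.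
  case w_rigid: (w \in rigid) => //=.
  case/forallPn=> i; rewrite negbK => w_conf.
  by apply/bigcupP; exists i; rewrite // inE w_rigid.
apply: leq_trans (subset_leq_card sub) _; apply: leq_trans (leq_card_setU _ _) _.
by rewrite mulSn leq_add2l; apply: card_bigcup_leq => i; apply: card_rigid_confusable.
Qed.

Lemma card_not_decodable_good : 2 ^ (n * k) - #|decodable| <= k.+1 ^ 2 * (2 ^ (n * k) - #|good|).
Proof.
have card_compl (A : {set syms}) : #|{: syms}| - #|A| = #|~: A|.
  by rewrite -(cardsC A) addKn.
rewrite -card_good_a -(card_word1_vec k n) !card_compl.
by rewrite expnS expn1 -mulnA (leq_trans card_not_decodable) // leq_mul2l card_not_rigid orbT.
Qed.

Definition t_i_dec i (x : assign (mu_net P) n) (mm : mu_msgs P n 1) : 'I_(2 ^ (n * 1)) :=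
  let z' := ec_enc C (inr (kz', i)) (embed x (syms_of_msgs mm)) msg0 in
  msg_of_word (if [pick w in decodable | z'_sym i w == z'] is Some w then w i
               else zero_word n 1).

Definition extracted_code : mu_code P n 1 := @MuCode P n 1 sim_enc t_i_dec.

Lemma extracted_code_local : mu_local extracted_code.
Proof.
split=> [|i x y mm mm' agree_xy eq_mm]; first exact: sim_enc_local.
rewrite /= /t_i_dec (C_local.1 (inr (kz', i)) _ (embed y (syms_of_msgs mm')) _ msg0) //.
by apply: embed_agree => // j /eq_mm; rewrite !ffunE => ->.
Qed.

Lemma extracted_code_success mm :
  syms_of_msgs mm \in decodable -> mu_success extracted_code mm.
Proof.
move=> mm_dec; apply/forallP => x; apply/implyP => x_run.
apply/forallP => i; apply/eqP; rewrite /= /t_i_dec.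
have -> : ec_enc C (inr (kz', i)) (embed x (syms_of_msgs mm)) msg0 = z'_sym i (syms_of_msgs mm).
  by rewrite /z'_sym syms_of_msgsK (sim_run_eq x_run).
case: pickP => [w /andP [w_dec /eqP eq_z']|/(_ (syms_of_msgs mm))]; last by rewrite mm_dec eqxx.
by rewrite (decodable_z'_sym_inj w_dec mm_dec eq_z') ffunE word_of_msgK.
Qed.

Lemma card_extracted_success :
  #|decodable| <= #|[set mm | mu_success extracted_code mm]|.
Proof.
have syms_bij : bijective (@syms_of_msgs P n).
  by exists (@msgs_of_syms P n); [exact: syms_of_msgsK | exact: msgs_of_symsK].
rewrite -(on_card_preimset (onW_bij _ syms_bij)); apply: subset_leq_card.
apply/subsetP => mm mm_dec; rewrite in_set; apply: extracted_code_success.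
by rewrite in_set in mm_dec.
Qed.

End ExtractedCode.

Lemma rate_of_failure_bound (eps : rat) (N s t c : nat) : (0 < eps)%R -> 0 < c -> 0 < N ->
  s <= N -> N - t <= c * (N - s) ->
  (1 - eps / c%:R <= s%:R / N%:R)%R -> (1 - eps <= t%:R / N%:R)%R.
Proof.
move=> eps_gt0 c_gt0 N_gt0 le_sN le_fail.
have N_gt0' : (0 < N%:R :> rat)%R by rewrite ltr0n.
have c_gt0' : (0 < c%:R :> rat)%R by rewrite ltr0n.
rewrite !ler_pdivlMr // !mulrBl !mul1r => rate_s.
have le_N : (N%:R <= t%:R + c%:R * (N%:R - s%:R) :> rat)%R.
  by rewrite -natrB // -natrM -natrD ler_nat; move: le_fail; generalize (c * (N - s)); lia.
have le_fail' : (c%:R * (N%:R - s%:R) <= eps * N%:R :> rat)%R.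
  have le_sN' : (N%:R - s%:R <= eps / c%:R * N%:R :> rat)%R by lra.
  have -> : (eps * N%:R = c%:R * (eps / c%:R * N%:R))%R by field; rewrite lt0r_neq0.
  by rewrite ler_wpM2l // ltW.
lra.
Qed.

Lemma mu_feasible_of_ec_feasible P :
  acyclic (mu_net P) -> ec_feasible (Ic P) (mu_k P) -> mu_feasible P 1.
Proof.
move=> P_acyclic feasible eps eps_gt0.
set c := (mu_k P).+1 ^ 2.
have c_gt0 : (0 < c%:R :> rat)%R by rewrite ltr0n expn_gt0.
have [n [n_gt0 [C [C_local C_rate]]]] := feasible _ (divr_gt0 eps_gt0 c_gt0).
exists n; split=> //; exists (extracted_code C); split; first exact: extracted_code_local.
rewrite card_ord in C_rate; rewrite card_mu_msgs.
have fail := leq_trans (leq_sub2l _ (card_extracted_success C_local P_acyclic))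
  (card_not_decodable_good C_local P_acyclic).
apply: (rate_of_failure_bound eps_gt0 _ _ _ fail C_rate); rewrite ?expn_gt0 //.
by rewrite -[X in _ <= X](card_ord (2 ^ (n * mu_k P))) max_card.
Qed.

Theorem theorem1 (P : mu_problem) :
  acyclic (mu_net P) ->
  (ec_feasible (Ic P) (mu_k P) <-> mu_feasible P 1).
Proof.
move=> P_acyclic; split; first exact: mu_feasible_of_ec_feasible.
exact: ec_feasible_of_mu_feasible.
Qed.
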